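(* For every priority profile $\succ=(\succ_s)_{s\in S}$ in which every $\succ_s$ is a partial order on $I$, there exists $\succ'\in\mathcal{E}(\succ)$ such that $f^{\succ'}\subseteq f^{\succ}$.
   Context: A partial order on $I$ is an asymmetric and transitive relation; a total order is a partial order that is also negatively transitive and complete. School choice setup: $I$ is a finite set of students with $|I|\ge 3$, $S$ a finite set of schools. Each student $i$ has a total order $P_i$ on $S\cup\{\emptyset\}$; $sR_is'$ means $sP_is'$ or $s=s'$. Each school $s$ has capacity $q_s\in\mathbb{Z}_{++}$ and an asymmetric priority relation $\succ_s$ on $I$. A matching $\mu$ assigns each $i$ to $\mu(i)\in S\cup\{\emptyset\}$, $\mu(s)=\{i:\mu(i)=s\}$, $|\mu(s)|\le q_s$. $\mu$ is stable for $\succ$ if it is individually rational ($\mu(i)R_i\emptyset$ for all $i$), non-wasteful ($sP_i\mu(i)$ implies $|\mu(s)|=q_s$) and fair (no $s$, $j\in\mu(s)$, $i\notin\mu(s)$ with $sR_i\mu(i)$ and $(i,j)\in\succ_s$). $\mu$ is Pareto dominated by $\mu'$ if $\mu'(i)R_i\mu(i)$ for all $i$ and $\mu'(i)P_i\mu(i)$ for some $i$. An SOSM for $\succ$ is a stable matching for $\succ$ not Pareto dominated by any stable matching for $\succ$; $f^\succ$ denotes the set of SOSMs for $\succ$. An extension of $\succ_s$ is a total order on $I$ containing $\succ_s$; $\mathcal{E}(\succ)$ is the set of profiles $(\succ'_s)_{s\in S}$ with each $\succ'_s$ an extension of $\succ_s$. *)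

From mathcomp Require Import all_boot.
Set Implicit Arguments. Unset Strict Implicit. Unset Printing Implicit Defensive.

Definition asymmetric {T : Type} (R : rel T) : Prop :=
  forall x y, R x y -> ~~ R y x.
Definition transitive_rel {T : Type} (R : rel T) : Prop :=
  forall x y z, R x y -> R y z -> R x z.
Definition neg_transitive {T : Type} (R : rel T) : Prop :=
  forall x y z, ~~ R x y -> ~~ R y z -> ~~ R x z.
Definition complete_rel {T : eqType} (R : rel T) : Prop :=
  forall x y, x != y -> R x y || R y x.

Definition partial_order {T : Type} (R : rel T) : Prop :=
  asymmetric R /\ transitive_rel R.
Definition total_order {T : eqType} (R : rel T) : Prop :=
  partial_order R /\ neg_transitive R /\ complete_rel R.

Section SchoolChoice.
Variables (I S : finType).
(* The outside option (emptyset) is [None]; school s is [Some s]. *)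
Variable P : I -> rel (option S).
Variable q : S -> nat.

Definition R_ (i : I) (a b : option S) : bool := P i a b || (a == b).

Definition assigned (mu : I -> option S) (s : S) : {set I} :=
  [set i | mu i == Some s].

Definition is_matching (mu : I -> option S) : Prop :=
  forall s, #|assigned mu s| <= q s.

Definition individually_rational (mu : I -> option S) : Prop :=
  forall i, R_ i (mu i) None.

Definition non_wasteful (mu : I -> option S) : Prop :=
  forall i s, P i (Some s) (mu i) -> #|assigned mu s| = q s.

Definition fair (pr : S -> rel I) (mu : I -> option S) : Prop :=
  ~ (exists s i j, [/\ j \in assigned mu s, i \notin assigned mu s,
                      R_ i (Some s) (mu i) & pr s i j]).

Definition stable (pr : S -> rel I) (mu : I -> option S) : Prop :=
  [/\ is_matching mu, individually_rational mu, non_wasteful mu & fair pr mu].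

Definition pareto_dominated (mu mu' : I -> option S) : Prop :=
  (forall i, R_ i (mu' i) (mu i)) /\ (exists i, P i (mu' i) (mu i)).

(* SOSM: stable and not Pareto dominated by any stable matching;
   [SOSM pr mu] expresses mu \in f^pr *)
Definition SOSM (pr : S -> rel I) (mu : I -> option S) : Prop :=
  stable pr mu /\ ~ (exists mu', stable pr mu' /\ pareto_dominated mu mu').

Definition extension_profile (pr pr' : S -> rel I) : Prop :=
  forall s, total_order (pr' s) /\ (forall i j, pr s i j -> pr' s i j).

End SchoolChoice.

From mathcomp Require Import all_boot zify.
From Stdlib Require Import Classical FunctionalExtensionality.
Set Implicit Arguments. Unset Strict Implicit. Unset Printing Implicit Defensive.

(* Fix a matching mu that is stable for pr and maximizes the potential
   sum_i #{options i ranks below mu i}; a Pareto improvement strictly raises the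
   potential, so mu is an SOSM for pr.  Extend each pr_s to a total order that puts
   last the students who prefer s to their mu-school, together with everyone below
   them in pr_s; mu remains stable for this extension pr'.  Under strict priorities
   the student-wise better of two stable matchings is stable (the lattice argument),
   so for nu stable under pr' the join of mu and nu is stable for pr, and maximality
   of the potential shows that no student prefers nu to mu.  An SOSM nu for pr' is
   then not Pareto dominated by mu, hence nu = mu. *)

Lemma exists_maximizer (T : Type) (p : T -> Prop) (f : T -> nat) (M : nat) :
  (forall x, f x <= M) -> (exists x, p x) ->
  exists2 x, p x & forall y, p y -> f y <= f x.
Proof.
move=> f_bound [x0 px0].
suff key : forall d x, p x -> M - f x <= d ->
    exists2 x, p x & forall y, p y -> f y <= f x by exact: key _ x0 px0 (leqnn _).
elim=> [|d IH] x px dist.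
  by exists x => // y _; have := f_bound y; lia.
have [[y py lt_xy]|] := classic (exists2 y, p y & f x < f y).
  by apply: (IH y py); have := f_bound y; lia.
move=> no_better; exists x => // y py; rewrite leqNgt; apply/negP => lt_xy.
by apply: no_better; exists y.
Qed.

Lemma radix_key_lt n a a' b b' c c' : b < n -> c < n ->
  (a < a') || (a == a') && (b < b') -> (a * n + b) * n + c < (a' * n + b') * n + c'.
Proof.
move=> lt_bn lt_cn /orP [lt_a | /andP [/eqP <- lt_b]]; last by nia.
have : a * n + b < a' * n by nia.
nia.
Qed.

Section SchoolChoice.
Variables (I S : finType) (P : I -> rel (option S)) (q : S -> nat).
Hypothesis hP : forall i, total_order (P i).

Lemma P_irr i x : P i x x = false.
Proof. by case: (hP i) => [[asym _] _]; apply/negP => h; move: (asym _ _ h); rewrite h. Qed.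

Lemma P_trans i x y z : P i x y -> P i y z -> P i x z.
Proof. by case: (hP i) => [[_ tr] _]; apply: tr. Qed.

Lemma R_refl i x : R_ P i x x.
Proof. by rewrite /R_ eqxx orbT. Qed.

Lemma PW i x y : P i x y -> R_ P i x y.
Proof. by rewrite /R_ => ->. Qed.

Lemma R_of_notP i x y : ~~ P i y x -> R_ P i x y.
Proof.
move=> nyx; rewrite /R_; have [->|ne] := eqVneq x y; first by rewrite orbT.
rewrite orbF; case: (hP i) => [_ [_ compl]].
by move: (compl _ _ ne); rewrite (negbTE nyx) orbF.
Qed.

Lemma P_of_R_neq i x y : R_ P i x y -> x != y -> P i x y.
Proof. by rewrite /R_ => /orP [//| /eqP ->]; rewrite eqxx. Qed.

Lemma R_P_trans i x y z : R_ P i x y -> P i y z -> P i x z.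
Proof. by rewrite /R_ => /orP [pxy /(P_trans pxy)|/eqP ->]. Qed.

Lemma P_R_trans i x y z : P i x y -> R_ P i y z -> P i x z.
Proof. by rewrite /R_ => pxy /orP [/(P_trans pxy)|/eqP <-]. Qed.

Definition join (mu nu : I -> option S) i := if P i (nu i) (mu i) then nu i else mu i.

Lemma join_R_left mu nu i : R_ P i (join mu nu i) (mu i).
Proof. by rewrite /join; case: ifP => [/PW|_]; last exact: R_refl. Qed.

Lemma join_R_right mu nu i : R_ P i (join mu nu i) (nu i).
Proof. by rewrite /join; case: ifP => [_|/negbT/R_of_notP //]; exact: R_refl. Qed.

Lemma sum_card_assigned (mu : I -> option S) (A : {set I}) :
  \sum_s #|assigned mu s :&: A| = #|[set i in A | mu i != None]|.
Proof.
have count_school s : #|assigned mu s :&: A| = \sum_(i in A) (mu i == Some s).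
  rewrite -sum1_card big_mkcond [RHS]big_mkcond /=; apply: eq_bigr => i _.
  by rewrite /assigned !inE; case: (mu i == Some s); case: (i \in A).
rewrite (eq_bigr _ (fun s _ => count_school s)) exchange_big /=.
rewrite -sum1_card big_mkcond [RHS]big_mkcond /=; apply: eq_bigr => i _.
rewrite inE; case: (i \in A) => //; case: (mu i) => [s0|]; last by rewrite big1.
rewrite (bigD1 s0) //= eqxx big1 // => s ne; rewrite eq_sym.
by rewrite (inj_eq (@Some_inj _)) (negbTE ne).
Qed.

Lemma stable_subrel (Q Q' : S -> rel I) mu :
  (forall s, subrel (Q s) (Q' s)) -> stable P q Q' mu -> stable P q Q mu.
Proof.
move=> QQ' [cap ir nw fair']; split=> // -[s [i [j [j_at_s i_not_at_s envy Qij]]]].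
by apply: fair'; exists s, i, j; split=> //; apply: QQ'.
Qed.

Section Join.
Variable Q : S -> rel I.
Hypothesis Q_complete : forall s, complete_rel (Q s).
Variables mu nu : I -> option S.
Hypotheses (mu_stable : stable P q Q mu) (nu_stable : stable P q Q nu).

Let improvers := [set i | P i (nu i) (mu i)].

Lemma improver_assigned i : i \in improvers -> nu i != None.
Proof.
rewrite inE => better; apply/eqP => nu_none; rewrite nu_none in better.
case: mu_stable => _ ir _ _.
by have := R_P_trans (ir i) better; rewrite P_irr.
Qed.

Lemma displaced_improves s b j : b \in assigned nu s :&: improvers ->
  j \in assigned mu s :\: assigned nu s -> j \in improvers.
Proof.
rewrite /assigned !inE => /andP [/eqP nu_b b_better] /andP [j_not_nu /eqP mu_j].
rewrite nu_b in b_better; rewrite mu_j; apply: contraT => j_not_better; exfalso.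
have ne_bj : b != j by apply: contraTneq b_better => ->; rewrite mu_j P_irr.
case/orP: (Q_complete s ne_bj) => [Qbj|Qjb].
- case: mu_stable => _ _ _ fair_mu; apply: fair_mu; exists s, b, j; split=> //.
  + by rewrite /assigned inE mu_j.
  + by rewrite /assigned inE; apply: contraTN b_better => /eqP ->; rewrite P_irr.
  + exact: PW.
- case: nu_stable => _ _ _ fair_nu; apply: fair_nu; exists s, j, b; split=> //.
  + by rewrite /assigned inE nu_b.
  + by rewrite /assigned inE.
  + exact: R_of_notP.
Qed.

Lemma card_improvers_le s :
  #|assigned nu s :&: improvers| <= #|assigned mu s :&: improvers|.
Proof.
have [-> | /set0Pn [b b_in]] := eqVneq (assigned nu s :&: improvers) set0.
  by rewrite cards0.
have mu_full : #|assigned mu s| = q s.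
  move: b_in; rewrite /assigned !inE => /andP [/eqP nu_b].
  by case: mu_stable => _ _ nw _; rewrite nu_b => /nw.
have nu_cap : #|assigned nu s| <= q s by case: nu_stable.
have left_improvers : assigned mu s :\: assigned nu s \subset assigned mu s :&: improvers.
  apply/subsetP => j j_in; rewrite inE (displaced_improves b_in j_in) andbT.
  by move: j_in; rewrite inE => /andP [].
have improvers_new : assigned nu s :&: improvers \subset assigned nu s :\: assigned mu s.
  apply/subsetP => j; rewrite /assigned !inE => /andP [/eqP nu_j].
  by rewrite nu_j eqxx andbT; apply: contraTN => /eqP ->; rewrite P_irr.
have := subset_leq_card left_improvers; have := subset_leq_card improvers_new.
by rewrite !cardsD (setIC (assigned nu s) (assigned mu s)); lia.
Qed.

(* Every improver is matched under nu, which gives the reverse inequality of the sums. *)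
Lemma card_improvers s :
  #|assigned nu s :&: improvers| = #|assigned mu s :&: improvers|.
Proof.
have leqif_sums := leqif_sum (P := predT) (fun s _ => leqif_eq (card_improvers_le s)).
apply/eqP; move: s; apply/forallP; rewrite -(geq_leqif leqif_sums) !sum_card_assigned.
have -> : [set i in improvers | nu i != None] = improvers.
  by apply/setP => i; rewrite inE andb_idr //; apply: improver_assigned.
by apply: subset_leq_card; apply/subsetP => i; rewrite inE => /andP [].
Qed.

Lemma card_assigned_join s : #|assigned (join mu nu) s| = #|assigned mu s|.
Proof.
have -> : assigned (join mu nu) s =
    (assigned mu s :\: improvers) :|: (assigned nu s :&: improvers).
  apply/setP => i; rewrite /assigned /join !inE.
  by case: (P i (nu i) (mu i)); rewrite /= ?andbT ?andbF ?orbF.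
have disj : (assigned mu s :\: improvers) :&: (assigned nu s :&: improvers) = set0.
  by apply/setP => i; rewrite !inE; case: (P i (nu i) (mu i)); rewrite ?andbF.
rewrite cardsU disj cards0 cardsD card_improvers.
have : #|assigned mu s :&: improvers| <= #|assigned mu s| by apply/subset_leq_card/subsetIl.
lia.
Qed.

Lemma join_stable : stable P q Q (join mu nu).
Proof.
case: (mu_stable) => _ ir_mu nw_mu fair_mu; case: (nu_stable) => _ ir_nu _ fair_nu.
split.
- by move=> s; rewrite card_assigned_join; case: mu_stable.
- by move=> i; rewrite /join; case: ifP.
- move=> i s better; rewrite card_assigned_join.
  by apply: nw_mu; apply: P_R_trans better (join_R_left _ _ _).
- move=> [s [i [j [j_at_s i_not_at_s envy Qij]]]].
  have ne : Some s != join mu nu i.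
    by apply: contraNneq i_not_at_s => at_s; rewrite /assigned inE -at_s.
  have better := P_of_R_neq envy ne.
  have better_mu := P_R_trans better (join_R_left _ _ _).
  have better_nu := P_R_trans better (join_R_right _ _ _).
  move: j_at_s; rewrite /assigned inE /join; case: ifP => _ /eqP at_s.
  + apply: fair_nu; exists s, i, j; split=> //; rewrite /assigned ?inE ?at_s //.
    * by apply: contraTN better_nu => /eqP ->; rewrite P_irr.
    * exact: PW.
  + apply: fair_mu; exists s, i, j; split=> //; rewrite /assigned ?inE ?at_s //.
    * by apply: contraTN better_mu => /eqP ->; rewrite P_irr.
    * exact: PW.
Qed.

End Join.

Definition rank i (x : option S) := #|[set y | P i x y]|.
Definition potential (mu : I -> option S) := \sum_i rank i (mu i).

Lemma rank_lt i x y : P i x y -> rank i y < rank i x.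
Proof.
move=> pxy; apply/proper_card/properP; split.
  by apply/subsetP => z; rewrite !inE; apply: P_trans.
by exists y; rewrite !inE ?pxy ?P_irr.
Qed.

Lemma rank_le i x y : R_ P i x y -> rank i y <= rank i x.
Proof. by rewrite /R_ => /orP [/rank_lt/ltnW | /eqP ->]. Qed.

Lemma potential_lt mu nu : pareto_dominated P mu nu -> potential mu < potential nu.
Proof.
move=> [weakly_better [j better]].
rewrite /potential (bigD1 j) //= [X in _ < X](bigD1 j) //=.
have : \sum_(i | i != j) rank i (mu i) <= \sum_(i | i != j) rank i (nu i).
  by apply: leq_sum => i _; apply: rank_le.
by have := rank_lt better; lia.
Qed.

Lemma potential_bounded mu : potential mu <= #|I| * #|{: option S}|.
Proof. by rewrite -sum_nat_const; apply: leq_sum => i _; apply: max_card. Qed.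

Section MaximalPotential.
Variables (pr : S -> rel I) (mu : I -> option S).
Hypotheses (mu_stable : stable P q pr mu)
  (mu_max : forall nu, stable P q pr nu -> potential nu <= potential mu).

Lemma max_potential_SOSM : SOSM P q pr mu.
Proof.
split=> // -[nu [nu_stable dominated]].
by have := mu_max nu_stable; have := potential_lt dominated; lia.
Qed.

Variable Q : S -> rel I.
Hypotheses (Q_complete : forall s, complete_rel (Q s))
  (pr_sub_Q : forall s, subrel (pr s) (Q s)) (mu_stable_Q : stable P q Q mu).

Lemma max_potential_unimprovable nu : stable P q Q nu -> forall i, ~~ P i (nu i) (mu i).
Proof.
move=> nu_stable i; apply/negP => better.
have join_stable_pr : stable P q pr (join mu nu).
  exact: stable_subrel pr_sub_Q (join_stable Q_complete mu_stable_Q nu_stable).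
have dominated : pareto_dominated P mu (join mu nu).
  by split; [exact: join_R_left | exists i; rewrite /join better].
by have := mu_max join_stable_pr; have := potential_lt dominated; lia.
Qed.

Lemma SOSM_eq_max_potential nu : SOSM P q Q nu -> nu = mu.
Proof.
move=> [nu_stable undominated]; apply: functional_extensionality => i.
have unimprovable := max_potential_unimprovable nu_stable.
apply/eqP; apply: contraT => ne; exfalso; apply: undominated.
exists mu; split=> //; split; first by move=> k; apply: R_of_notP.
by exists i; apply: P_of_R_neq; [apply: R_of_notP | rewrite eq_sym].
Qed.

End MaximalPotential.

Section AdaptedExtension.
Variable pr : S -> rel I.
Hypothesis pr_order : forall s, partial_order (pr s).
Variable mu : I -> option S.

Definition claimants s := [set i | P i (Some s) (mu i)].
Definition below_claimants s :=
  [set i | [exists d in claimants s, (d == i) || pr s d i]].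
Definition pr_height s x := #|[set y | pr s y x]|.

(* Lexicographic key: whether x lies weakly below a claimant of s, then the
   number of students with priority over x, then enum_rank to break ties. *)
Definition adapted_key s x :=
  ((x \in below_claimants s) * #|I| + pr_height s x) * #|I| + enum_rank x.
Definition adapted_pr s x y := adapted_key s x < adapted_key s y.

Lemma pr_height_lt s x : pr_height s x < #|I|.
Proof.
rewrite -cardsT; apply/proper_card/properP; split; first exact: subsetT.
exists x; rewrite ?inE //; case: (pr_order s) => asym _.
by apply/negP => prx; move: (asym _ _ prx); rewrite prx.
Qed.

Lemma adapted_key_inj s : injective (adapted_key s).
Proof.
move=> x y eq_key.
have : adapted_key s x %% #|I| = adapted_key s y %% #|I| by rewrite eq_key.
by rewrite /adapted_key !modnMDl !modn_small // => /val_inj/enum_rank_inj.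
Qed.

Lemma adapted_pr_total s : total_order (adapted_pr s).
Proof.
rewrite /adapted_pr; split; [split|split].
- by move=> x y lt_xy; rewrite -leqNgt ltnW.
- by move=> x y z; apply: ltn_trans.
- by move=> x y z; rewrite -!leqNgt => le_yx le_zy; apply: leq_trans le_zy le_yx.
- by move=> x y ne; rewrite -neq_ltn; apply: contra ne => /eqP/adapted_key_inj ->.
Qed.

Lemma adapted_pr_extends s : subrel (pr s) (adapted_pr s).
Proof.
move=> x y prxy; case: (pr_order s) => asym trans.
have height_lt : pr_height s x < pr_height s y.
  apply/proper_card/properP; split.
    by apply/subsetP => z; rewrite !inE => przx; apply: trans przx prxy.
  exists x; rewrite !inE ?prxy //.
  by apply/negP => prxx; move: (asym _ _ prxx); rewrite prxx.
have below_mono : x \in below_claimants s -> y \in below_claimants s.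
  rewrite !inE => /existsP [d /andP [claims d_above_x]].
  apply/existsP; exists d; rewrite claims /=; apply/orP; right.
  by case/orP: d_above_x => [/eqP -> // | /trans]; apply.
apply: radix_key_lt; [exact: pr_height_lt | exact: ltn_ord |].
have [/below_mono -> | _] := boolP (x \in below_claimants s); first by rewrite /= height_lt.
by case: (y \in _); rewrite //= height_lt.
Qed.

Lemma adapted_extension : extension_profile pr adapted_pr.
Proof. by move=> s; split; [apply: adapted_pr_total | apply: adapted_pr_extends]. Qed.

(* Claimants of s and everyone below them get the lowest adapted priorities at s,
   so a claimant can never justifiably envy a student assigned to s. *)
Lemma stable_adapted : stable P q pr mu -> stable P q adapted_pr mu.
Proof.
move=> [cap ir nw fair_pr]; split=> // -[s [i [j [j_at_s i_not_at_s envy adapted_ij]]]].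
have i_claims : i \in claimants s.
  rewrite inE; apply: P_of_R_neq envy _.
  by apply: contraNneq i_not_at_s => at_s; rewrite /assigned inE -at_s.
have i_below : i \in below_claimants s.
  by rewrite inE; apply/existsP; exists i; rewrite i_claims eqxx.
have j_not_below : j \notin below_claimants s.
  rewrite inE; apply/existsP => -[d /andP [d_claims /orP [/eqP eq_dj | prdj]]].
    move: d_claims j_at_s; rewrite eq_dj !inE => claims /eqP at_s.
    by rewrite at_s P_irr in claims.
  apply: fair_pr; exists s, d, j; split=> //.
  - by rewrite inE; apply: contraTN d_claims => /eqP at_s; rewrite inE at_s P_irr.
  - by move: d_claims; rewrite inE => /PW.
move: adapted_ij; rewrite /adapted_pr ltnNge => /negP; apply; apply/ltnW/radix_key_lt.
- exact: pr_height_lt.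
- exact: ltn_ord.
- by rewrite i_below (negbTE j_not_below).
Qed.

End AdaptedExtension.

End SchoolChoice.

Theorem corollary3 (I S : finType) (hI : 3 <= #|I|)
  (P : I -> rel (option S)) (hP : forall i, total_order (P i))
  (q : S -> nat) (hq : forall s, 0 < q s)
  (pr : S -> rel I) (hpr : forall s, partial_order (pr s)) :
  exists pr' : S -> rel I,
    extension_profile pr pr' /\
    (forall mu : I -> option S, SOSM P q pr' mu -> SOSM P q pr mu).
Proof.
have [[mu0 mu0_stable] | no_stable] := classic (exists mu, stable P q pr mu); last first.
  exists (adapted_pr P pr (fun _ => None)); split; first exact: adapted_extension.
  move=> nu [nu_stable _]; exfalso; apply: no_stable; exists nu.
  exact: stable_subrel (adapted_pr_extends P hpr _) nu_stable.
have [mu mu_stable mu_max] :=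
  exists_maximizer (potential_bounded P) (ex_intro _ mu0 mu0_stable).
exists (adapted_pr P pr mu); split; first exact: adapted_extension.
move=> nu nu_SOSM.
have adapted_complete s : complete_rel (adapted_pr P pr mu s).
  by case: (adapted_pr_total P pr mu s) => _ [].
rewrite (SOSM_eq_max_potential hP mu_max adapted_complete (adapted_pr_extends P hpr mu)
  (stable_adapted hP hpr mu_stable) nu_SOSM).
exact: max_potential_SOSM.
Qed.
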